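(* The class $\mathcal K_\omega^*$ has the expansion property relative to the class $\mathcal K_\omega$.
   Context: Expansion property: let $L\subseteq L^*$ be relational languages, $\mathcal K$ a class of finite $L$-structures and $\mathcal K^*$ a class of finite $L^*$-structures whose $L$-reducts lie in $\mathcal K$. $\mathcal K^*$ has the expansion property relative to $\mathcal K$ if for every $\mathbf A\in\mathcal K$ there is $\mathbf B\in\mathcal K$ such that for all $\mathbf A^*,\mathbf B^*\in\mathcal K^*$ whose $L$-reducts are $\mathbf A$ and $\mathbf B$ respectively, $\mathbf A^*$ embeds into $\mathbf B^*$. A directed graph $(A,E)$ ($E$ irreflexive and asymmetric) is complete multipartite if the relation ''$u=v$, or neither $E(u,v)$ nor $E(v,u)$'' is an equivalence relation on $A$; its classes are called the parts. $\mathcal K_\omega$ is the class of all finite complete multipartite directed graphs (any finite number of parts), i.e. the age of the generic complete $\omega$-partite directed graph $\omega*I_\omega$. $\mathcal K_\omega^*$ is the class of finite structures $(A,E,<)$ where $(A,E)\in\mathcal K_\omega$ and $<$ is a linear order on $A$ for which every part is an interval. *)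

From mathcomp Require Import all_boot.
Set Implicit Arguments. Unset Strict Implicit. Unset Printing Implicit Defensive.

Definition is_digraph (T : finType) (E : rel T) : Prop :=
  (forall x, ~~ E x x) /\ (forall x y, E x y -> ~~ E y x).

Definition same_part (T : finType) (E : rel T) : rel T :=
  fun u v => (u == v) || (~~ E u v && ~~ E v u).

Definition complete_multipartite (T : finType) (E : rel T) : Prop :=
  is_digraph E /\
  [/\ reflexive (same_part E), symmetric (same_part E) & transitive (same_part E)].

Definition strict_linear_order (T : finType) (lt : rel T) : Prop :=
  [/\ (forall x, ~~ lt x x), transitive lt & (forall x y, x != y -> lt x y || lt y x)].

(* Membership in K_omega^*: (T,E) in K_omega and lt a linear order on T
   for which every part is an interval. *)
Definition in_K_omega_star (T : finType) (E : rel T) (lt : rel T) : Prop :=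
  [/\ complete_multipartite E, strict_linear_order lt &
      (forall x y z, same_part E x y -> lt x z -> lt z y -> same_part E x z)].

Definition embedding (A B : finType) (EA : rel A) (ltA : rel A)
    (EB : rel B) (ltB : rel B) (f : A -> B) : Prop :=
  [/\ injective f,
      (forall x y, EB (f x) (f y) = EA x y) &
      (forall x y, ltB (f x) (f y) = ltA x y)].

(* Given a finite complete multipartite digraph A with n vertices, the witness
   B has n parts of size M = n * (m * n), with edges between parts oriented by
   a bit vector g.  For a convex order on A and one on B we read off
   lexicographic coordinates (rank of the part, position inside the part) on
   both sides; for every parameter (a, b) in 'I_m * 'I_m this gives an
   order-preserving placement of A into B, sending a vertex with coordinates
   (t, j) to slot n * (a + b * t) + j of part t of B.  It is an embedding as
   soon as the bits of g on its cross pairs agree with A.  Distinct parameters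
   use disjoint bits, so a uniformly random g misses all m * m placements with
   probability at most (1 - 2 ^ - (n * n)) ^ (m * m); a union bound over the
   finitely many coordinate data, made possible by choosing m large, yields an
   orientation g that works for all convex orders simultaneously. *)

From mathcomp Require Import all_boot zify.
Set Implicit Arguments. Unset Strict Implicit. Unset Printing Implicit Defensive.

Section LocalEvents.
Variable I : finType.
Local Notation G := {ffun I -> bool}.

Definition flip (c : I) (g : G) : G := [ffun i => if i == c then ~~ g i else g i].

Lemma flipK c : involutive (flip c).
Proof. by move=> g; apply/ffunP=> i; rewrite !ffunE; case: eqP => //= _; rewrite negbK. Qed.

(* A property that ignores coordinate [c] holds for exactly half of its
   functions with a prescribed value at [c]: flipping [c] pairs them up. *)
Lemma card_fix_coord (Q : G -> bool) (c : I) (b : bool) :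
  (forall g g' : G, (forall i, i != c -> g i = g' i) -> Q g = Q g') ->
  #|[set g : G | Q g && (g c == b)]| * 2 = #|[set g : G | Q g]|.
Proof.
move=> Qc.
have flip_same (g : G) : Q (flip c g) = Q g.
  by apply: Qc => i ic; rewrite ffunE (negbTE ic).
have flip_other : #|[set g : G | Q g && (g c != b)]| = #|[set g : G | Q g && (g c == b)]|.
  rewrite -(card_imset [set g : G | Q g && (g c == b)] (inv_inj (flipK c))).
  apply: eq_card => g; apply/idP/imsetP => [|[h]].
    rewrite inE => /andP[Qg gc]; exists (flip c g); last by rewrite flipK.
    by rewrite inE ffunE eqxx flip_same Qg; case: (g c) b gc => -[].
  rewrite inE => /andP[Qh /eqP hc] ->.
  by rewrite inE ffunE eqxx hc flip_same Qh; case: b {hc}.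
rewrite -(cardsID [set g : G | g c == b] [set g : G | Q g]) muln2 -addnn; congr addn.
  by apply: eq_card => g; rewrite !inE.
by rewrite -flip_other; apply: eq_card => g; rewrite !inE andbC.
Qed.

Lemma card_fix_coords (Q : G -> bool) (ks : seq I) (h : G) :
  uniq ks ->
  (forall g g' : G, (forall i, i \notin ks -> g i = g' i) -> Q g = Q g') ->
  #|[set g : G | Q g && all (fun c => g c == h c) ks]| * 2 ^ size ks = #|[set g : G | Q g]|.
Proof.
elim: ks Q => [|c ks IH] Q /= => [_ _|/andP[cks uks] Qks].
  by rewrite muln1; apply: eq_card => g; rewrite !inE andbT.
rewrite expnS mulnA.
have -> : #|[set g : G | Q g && ((g c == h c) && all (fun c0 => g c0 == h c0) ks)]|
   = #|[set g : G | (Q g && all (fun c0 => g c0 == h c0) ks) && (g c == h c)]|.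
  by apply: eq_card => g; rewrite !inE andbCA andbC.
rewrite card_fix_coord.
  by apply: IH => // g g' E; apply: Qks => i; rewrite inE negb_or => /andP[_]; exact: E.
move=> g g' E; congr andb.
  by apply: Qks => i; rewrite inE => /norP[/E].
apply: eq_in_all => i iks /=.
by rewrite E //; apply: contraNneq cks => <-.
Qed.

Lemma card_avoid_local_events (X : eqType) (s : seq X) (K : X -> {set I})
    (P : X -> G -> bool) d :
  uniq s ->
  {in s &, forall l l', l != l' -> [disjoint K l & K l']} ->
  (forall l (g g' : G), (forall c, c \in K l -> g c = g' c) -> P l g = P l g') ->
  {in s, forall l, exists g, P l g} ->
  (forall l, 2 ^ #|K l| <= d.+1) ->
  #|[set g : G | all (fun l => ~~ P l g) s]| * d.+1 ^ size s <= 2 ^ #|I| * d ^ size s.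
Proof.
elim: s => [|l s IH] /= => [*|/andP[ls us] Kdisj Plocal Psat Ksize].
  by rewrite !muln1 -card_bool -card_ffun max_card.
set Q := fun g : G => all (fun l => ~~ P l g) s.
set q := #|[set g : G | Q g]|.
have IHs : q * d.+1 ^ size s <= 2 ^ #|I| * d ^ size s.
  apply: IH => // [x y xs ys|x xs]; [apply: Kdisj | apply: Psat]; by rewrite inE ?xs ?ys orbT.
have [g0 Pg0] := Psat l (mem_head _ _).
have Qlocal (g g' : G) : (forall i, i \notin enum (K l) -> g i = g' i) -> Q g = Q g'.
  move=> E; apply: eq_in_all => l' l's /=; congr negb; apply: Plocal => c cK.
  have Kl'l : [disjoint K l' & K l].
    by apply: Kdisj; rewrite ?mem_head ?inE ?l's ?orbT //; apply: contraNneq ls => <-.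
  by apply: E; rewrite mem_enum (disjointFr Kl'l cK).
set a := #|[set g : G | Q g && P l g]|.
set b := #|[set g : G | Q g && ~~ P l g]|.
have qab : q = a + b by rewrite /q -(cardsID [set g : G | P l g]); congr addn;
  apply: eq_card => g; rewrite !inE andbC.
(* The functions agreeing with [g0] on [K l] all satisfy [P l]. *)
have qa : q <= a * d.+1.
  have := card_fix_coords g0 (enum_uniq (K l)) Qlocal; rewrite -cardE /q => <-.
  apply: leq_mul (Ksize l); apply: subset_leq_card; apply/subsetP => g.
  rewrite !inE => /andP[-> /allP agree] /=; rewrite (Plocal l g g0) // => c cK.
  by apply/eqP/agree; rewrite mem_enum.
have -> : #|[set g : G | ~~ P l g && Q g]| = b by apply: eq_card => g; rewrite !inE andbC.
have bq : b * d.+1 <= q * d by move: qa; rewrite qab; nia.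
rewrite !expnS mulnA; apply: leq_trans (leq_mul bq (leqnn _)) _.
by rewrite mulnAC mulnCA [d * _]mulnC leq_mul2r IHs orbT.
Qed.

End LocalEvents.

Lemma card_bigcup_le (D T : finType) (F : D -> {set T}) :
  #|\bigcup_dd F dd| <= \sum_dd #|F dd|.
Proof.
elim/big_rec2: _ => [|dd k S _ leSk]; first by rewrite cards0.
by apply: leq_trans (leq_card_setU _ _).1 _; rewrite leq_add2l.
Qed.

Lemma leq_pow2r m n e : m <= n -> m ^ e <= n ^ e.
Proof. by case: e => // e; rewrite leq_exp2r. Qed.

(* Bernoulli's inequality [(1 + 1/d) ^ k >= 1 + k/d], cleared of denominators. *)
Lemma bernoulli d k : d ^ k * (d + k) <= d.+1 ^ k * d.
Proof.
elim: k => [|k IH]; first by rewrite addn0.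
have : d ^ k <= d.+1 ^ k by apply: leq_pow2r.
by rewrite !expnS; nia.
Qed.

Lemma half_after_d_steps d : 0 < d -> 2 * d ^ d <= d.+1 ^ d.
Proof. by move=> d0; have := bernoulli d d; rewrite addnn -mul2n -(leq_pmul2r d0); nia. Qed.

Lemma decay_beats_count d s L D :
  0 < d -> d * s <= L -> D < 2 ^ s -> D * d ^ L < d.+1 ^ L.
Proof.
move=> d0 dsL Ds; rewrite -(subnKC dsL) !expnD mulnA.
have halving : 2 ^ s * d ^ (d * s) <= d.+1 ^ (d * s).
  by rewrite !expnM -expnMn leq_pow2r // half_after_d_steps.
apply: (@leq_trans (2 ^ s * d ^ (d * s) * d ^ (L - d * s))).
  by rewrite ltn_pmul2r ?expn_gt0 ?d0 // ltn_pmul2r ?expn_gt0 ?d0.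
by rewrite leq_mul // leq_pow2r.
Qed.

Lemma exp_beats_affine a b : exists r, a + b * r <= 2 ^ r.
Proof.
have square_le r : 4 <= r -> r * r <= 2 ^ r.
  elim: r => // r IH; rewrite leq_eqVlt => /orP[/eqP<- //|r4].
  by have := IH r4; rewrite expnS; nia.
exists (a + b + 4); apply: leq_trans (square_le _ (leq_addl _ _)); nia.
Qed.

(* For every [n > 0] there is [m] such that the number
   [N ^ N * (n * n) ^ n], [N = n ^ 3 * m], of placement data in the union
   bound is outweighed by the failure probability [(1 - 2 ^ - (n * n)) ^ (m * m)].
   Take [m = 2 ^ r] with [r] large: the count is below [2 ^ s] for
   [s = (n ^ 3 + r) * N + n ^ 3 + 1], and [c * s <= m * m]. *)
Lemma room_for_union_bound n : 0 < n ->
  exists m, let c := 2 ^ (n * n) in let N := n * (n * (m * n)) in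
    N ^ N * (n * n) ^ n * c.-1 ^ (m * m) < c ^ (m * m).
Proof.
move=> n0; set c := 2 ^ (n * n); set K := n * n * n.
have c_gt1 : 1 < c by rewrite -[1]/(2 ^ 0) ltn_exp2l // muln_gt0 n0.
have [r hr] := exp_beats_affine (c * (K * K + K + 1)) (c * K).
exists (2 ^ r) => /=; set m := 2 ^ r; set N := n * (n * (m * n)).
have NE : N = K * m by rewrite /N /K [m * n]mulnC !mulnA.
set s := (K + r) * N + K + 1.
rewrite -[c in _ < c ^ _](prednK (ltnW c_gt1)).
apply: (@decay_beats_count _ s); first by rewrite -ltnS prednK // ltnW.
- have m_gt0 : 0 < m by rewrite expn_gt0.
  apply: (@leq_trans (c * s)); first by rewrite leq_mul2r leq_pred orbT.
  by move: hr; rewrite /s NE -/m; nia.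
- have N_le : N <= 2 ^ (K + r).
    by rewrite NE expnD leq_mul2r ltnW ?orbT // ltn_expl.
  have n2_le : (n * n) ^ n <= 2 ^ K.
    by rewrite /K expnM leq_pow2r // ltnW // ltn_expl.
  apply: (@leq_ltn_trans (2 ^ ((K + r) * N) * 2 ^ K)).
    by rewrite (leq_mul _ n2_le) // expnM leq_pow2r.
  by rewrite -expnD /s addn1 ltn_exp2l.
Qed.

Lemma block_offset_inj n X Y j k :
  j < n -> k < n -> n * X + j = n * Y + k -> X = Y /\ j = k.
Proof.
move=> jn kn e; have n0 : 0 < n by apply: leq_ltn_trans jn.
have := congr1 (divn^~ n) e; have := congr1 (modn^~ n) e.
by rewrite /= ![n * _]mulnC !modnMDl !divnMDl // !modn_small // !divn_small // !addn0.
Qed.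

Lemma affine_pair_inj (a b u v u' v' : nat) : a != b ->
  u + v * a = u' + v' * a -> u + v * b = u' + v' * b -> u = u' /\ v = v'.
Proof.
wlog lt_ab : a b / a < b.
  move=> W ab ea eb; case: (ltngtP a b) => h; first exact: (W a b).
    by apply: (W b a) => //; rewrite eq_sym.
  by rewrite h eqxx in ab.
move=> _ ea eb.
suff vv : v = v' by split => //; move: ea; rewrite vv => /addIn.
have [k bk] : exists k, b = a + k.+1 by exists (b - a).-1; lia.
by move: eb; rewrite bk; nia.
Qed.

Lemma same_partC (T : finType) (E : rel T) x y : same_part E x y = same_part E y x.
Proof. by rewrite /same_part eq_sym andbC. Qed.

Section CompleteMultipartite.
Variables (T : finType) (E : rel T).
Hypothesis cmE : complete_multipartite E.

Lemma same_part_no_edge x y : same_part E x y -> E x y = false.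
Proof.
case: cmE => -[irr _] _; rewrite /same_part.
by case: eqP => [->|_ /andP[/negbTE //]]; rewrite (negbTE (irr y)).
Qed.

Lemma cross_edge x y : ~~ same_part E x y -> E x y = ~~ E y x.
Proof.
case: cmE => -[_ asym] _; rewrite /same_part negb_or => /andP[_].
by rewrite negb_and !negbK; case Exy: (E x y) => /= h; [rewrite (asym _ _ Exy) | rewrite h].
Qed.

Definition part_of (x : T) : {set T} := [set y | same_part E x y].

Lemma part_ofE x y : same_part E x y = (part_of x == part_of y).
Proof.
case: cmE => _ [refl sym trans]; apply/idP/eqP => [xy|exy].
  by apply/setP => z; rewrite !inE; apply/idP/idP; apply: trans; rewrite // sym.
by have := refl y; rewrite -[same_part E y y]in_set -/(part_of y) -exy inE.
Qed.

End CompleteMultipartite.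

Section ConvexOrder.
Variables (T P : finType) (E lt : rel T) (p : T -> P).
Hypothesis H : in_K_omega_star E lt.
Hypothesis pE : forall x y, same_part E x y = (p x == p y).

Lemma lt_irr x : ~~ lt x x.
Proof. by case: H => _ [irr _ _] _. Qed.

Lemma lt_trans y x z : lt x y -> lt y z -> lt x z.
Proof. by case: H => _ [_ tr _] _; apply: tr. Qed.

Lemma lt_total x y : x != y -> lt x y || lt y x.
Proof. by case: H => _ [_ _ tot] _; apply: tot. Qed.

Lemma part_convex x y z : p x = p y -> lt x z -> lt z y -> p z = p x.
Proof.
case: H => _ _ conv pxy xz zy.
by have := conv x y z; rewrite !pE pxy eqxx => /(_ isT xz zy) /eqP.
Qed.

(* The rank of the part of [x] among the parts, and the position of [x]
   inside its part; together they are the lexicographic coordinates of [x]. *)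
Definition part_rank (x : T) : nat :=
  #|[set q | (q != p x) && [exists y, (p y == q) && lt y x]]|.
Definition part_pos (x : T) : nat := #|[set y | (p y == p x) && lt y x]|.

Lemma part_rank_lt x : part_rank x < #|[set p y | y : T]|.
Proof.
apply: proper_card; apply/properP; split; last by exists (p x); rewrite ?imset_f ?inE ?eqxx.
apply/subsetP => q; rewrite inE => /andP[_ /existsP[y /andP[/eqP <- _]]].
exact: imset_f.
Qed.

Lemma part_pos_lt x : part_pos x < #|[set y | p y == p x]|.
Proof.
apply: proper_card; apply/properP; split; last by exists x; rewrite !inE ?eqxx ?(negbTE (lt_irr x)) ?andbF.
by apply/subsetP => y; rewrite !inE => /andP[].
Qed.

Lemma part_pos_mono x y : p x = p y -> lt x y -> part_pos x < part_pos y.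
Proof.
move=> pxy xy; apply: proper_card; apply/properP; split.
  by apply/subsetP => z; rewrite !inE -pxy => /andP[-> /lt_trans->].
by exists x; rewrite !inE ?pxy ?eqxx ?xy ?(negbTE (lt_irr x)) ?andbF.
Qed.

Lemma part_rank_mono x y : p x != p y -> lt x y -> part_rank x < part_rank y.
Proof.
move=> pxy xy; apply: proper_card; apply/properP; split; last first.
  exists (p x); rewrite !inE ?eqxx // pxy /=.
  by apply/existsP; exists x; rewrite eqxx.
apply/subsetP => q; rewrite !inE => /andP[qx /existsP[z /andP[/eqP zq zx]]].
rewrite -zq; apply/andP; split; last by apply/existsP; exists z; rewrite eqxx (lt_trans zx xy).
by apply: contra qx => /eqP pzy; rewrite -zq -(part_convex pzy zx xy).
Qed.

Lemma part_rank_eq x y : p x = p y -> part_rank x = part_rank y.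
Proof.
wlog xy : x y / lt x y.
  move=> W pxy; case: (eqVneq x y) => [-> //|/lt_total/orP[] h]; first exact: W.
  by rewrite (W y x).
move=> pxy; apply: eq_card => q; rewrite !inE -pxy; apply: andb_id2l => qx.
apply/existsP/existsP => -[z /andP[zq zlt]]; exists z; rewrite zq //=.
  exact: lt_trans zlt xy.
have zx : z != x by apply: contraNneq qx => zx; rewrite -(eqP zq) zx.
case/orP: (lt_total zx) => // xz.
by move: qx; rewrite -(eqP zq) (part_convex pxy xz zlt) eqxx.
Qed.

Lemma part_rank_eqE x y : (part_rank x == part_rank y) = (p x == p y).
Proof.
apply/idP/idP => [|/eqP/part_rank_eq->//]; apply: contraLR => pxy.
have xy : x != y by apply: contraNneq pxy => ->.
rewrite neq_ltn; case/orP: (lt_total xy) => h; first by rewrite part_rank_mono.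
by rewrite (part_rank_mono _ h) ?orbT // eq_sym.
Qed.

Lemma lt_lex x y : lt x y =
  (part_rank x < part_rank y) || (part_rank x == part_rank y) && (part_pos x < part_pos y).
Proof.
have lex_mono u v : lt u v ->
    (part_rank u < part_rank v) || (part_rank u == part_rank v) && (part_pos u < part_pos v).
  move=> uv; rewrite part_rank_eqE; case: (eqVneq (p u) (p v)) => puv /=.
    by rewrite part_pos_mono ?orbT.
  by rewrite part_rank_mono.
apply/idP/idP => [/lex_mono//|lexy].
have xy : x != y by apply: contraTneq lexy => ->; rewrite eqxx !ltnn.
case/orP: (lt_total xy) => // /lex_mono; move: lexy.
case: ltngtP => //= _ lt1 lt2.
by have := ltn_trans lt1 lt2; rewrite ltnn.
Qed.

Lemma coords_inj x y : part_rank x = part_rank y -> part_pos x = part_pos y -> x = y.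
Proof.
move=> rxy pxy; apply/eqP; apply: contraT => xy.
by case/orP: (lt_total xy); rewrite lt_lex rxy pxy !ltnn andbF.
Qed.

End ConvexOrder.

Definition lex_lt (k l : nat) : rel ('I_k * 'I_l) :=
  fun u v => (u.1 < v.1) || (u.1 == v.1) && (u.2 < v.2).

Section RandomTarget.
Variables n M : nat.

(* The target has [n] parts of size [M]: vertex [(q, i)] is the [i]-th vertex
   of part [q]. An orientation holds one bit for each ordered pair of vertices. *)
Definition target : finType := ('I_n * 'I_M)%type.
Definition target_pair : finType := (target * target)%type.
Definition orientation : Type := {ffun target_pair -> bool}.

(* The edge between vertices of different parts is directed by the bit of the
   pair whose first vertex comes first in the enumeration of [target]. *)
Definition oriented (g : orientation) : rel target :=
  fun u v => (u.1 != v.1) && (if enum_rank u < enum_rank v then g (u, v) else ~~ g (v, u)).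

Lemma oriented_cross g u v : u.1 != v.1 -> oriented g v u = ~~ oriented g u v.
Proof.
move=> uv; rewrite /oriented uv eq_sym uv /=.
case: ltngtP => [_|_|/val_inj/enum_rank_inj e]; rewrite ?negbK //.
by rewrite e eqxx in uv.
Qed.

Lemma oriented_same_part g u v : same_part (oriented g) u v = (u.1 == v.1).
Proof.
case: (eqVneq u.1 v.1) => [e|uv]; first by rewrite /same_part /oriented e eqxx orbT.
have neq : u != v by apply: contraNneq uv => ->.
by rewrite /same_part (negbTE neq) (oriented_cross _ uv); case: (oriented g u v).
Qed.

Lemma oriented_cm g : complete_multipartite (oriented g).
Proof.
split; first split => [u|u v]; first by rewrite /oriented eqxx.
  by move=> Euv; rewrite oriented_cross ?Euv //; case/andP: Euv.
split=> [u|u v|v u w]; rewrite !oriented_same_part // => /eqP-> //.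
Qed.

Lemma target_coords g ltB : in_K_omega_star (oriented g) ltB ->
  exists psi : {ffun target -> target},
  [/\ injective psi, forall u v, ((psi u).1 == (psi v).1) = (u.1 == v.1)
    & forall u v, ltB (psi u) (psi v) = lex_lt u v].
Proof.
move=> HB; have pE := oriented_same_part g.
have rank_lt u : part_rank ltB fst u < n.
  apply: leq_trans (part_rank_lt ltB fst u) _.
  by rewrite -[n in _ <= n]card_ord max_card.
have pos_lt u : part_pos ltB fst u < M.
  have := part_pos_lt fst HB u; congr (_ < _).
  have -> : [set y : target | y.1 == u.1] = setX [set u.1] [set: 'I_M].
    by apply/setP => -[q i]; rewrite !inE andbT.
  by rewrite cardsX cards1 cardsT card_ord mul1n.
pose rho u : target := (Ordinal (rank_lt u), Ordinal (pos_lt u)).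
have rho_inj : injective rho.
  by move=> u v [ruv puv]; apply: (coords_inj HB pE).
have rhoK := f_invF rho_inj.
have rank_inv u : part_rank ltB fst (invF rho_inj u) = u.1 by rewrite -[in RHS](rhoK u).
have pos_inv u : part_pos ltB fst (invF rho_inj u) = u.2 by rewrite -[in RHS](rhoK u).
exists [ffun u => invF rho_inj u]; split=> [u v|u v|u v]; rewrite !ffunE.
- exact: (can_inj rhoK).
- by rewrite -(part_rank_eqE HB pE) !rank_inv.
- by rewrite (lt_lex HB pE) !rank_inv !pos_inv.
Qed.
End RandomTarget.

Section Placement.
Variables (A : finType) (EA : rel A) (m : nat).
Hypothesis cmA : complete_multipartite EA.
Let n := #|A|.
Let M := n * (m * n).
Local Notation B := (target n M).
Local Notation sp := (same_part EA).

(* Slot [n * (a + b * t) + j] of a part of the target, for [a, b < m] and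
   [t, j < n]; the affine pattern [a + b * t] is what makes different
   parameters [(a, b)] use disjoint pairs of target vertices. *)
Lemma slot_lt (a b : 'I_m) (t j : 'I_n) : n * (a + b * t) + j < M.
Proof.
have pattern_lt : a + b * t < m * n.
  have bt : b * t <= m * t by rewrite leq_mul2r ltnW ?orbT.
  have mt : m * t.+1 <= m * n by rewrite leq_mul2l ltn_ord orbT.
  by move: (ltn_ord a) bt mt; rewrite mulnS; lia.
apply: (@leq_trans (n * (a + b * t).+1)); first by rewrite mulnS addnC ltn_add2r.
by rewrite leq_mul2l pattern_lt orbT.
Qed.

(* Placement data: [dd.1] maps lexicographic coordinates (part, position) to
   target vertices and [dd.2] gives lexicographic coordinates of the source. *)
Definition data : finType := ({ffun B -> B} * {ffun A -> 'I_n * 'I_n})%type.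

Definition valid (dd : data) : bool :=
  [&& injectiveb dd.1, [forall u, forall v, ((dd.1 u).1 == (dd.1 v).1) == (u.1 == v.1)],
      injectiveb dd.2 & [forall x, forall y, sp x y == ((dd.2 x).1 == (dd.2 y).1)]].

Lemma validP (dd : data) : reflect
  [/\ injective dd.1, forall u v, ((dd.1 u).1 == (dd.1 v).1) = (u.1 == v.1),
      injective dd.2 & forall x y, sp x y = ((dd.2 x).1 == (dd.2 y).1)]
  (valid dd).
Proof.
apply: (iffP and4P) => -[inj1 part1 inj2 part2]; split; try exact/injectiveP.
- by move=> u v; have /forallP/(_ v)/eqP := forallP part1 u.
- by move=> x y; have /forallP/(_ y)/eqP := forallP part2 x.
- by apply/forallP => u; apply/forallP => v; rewrite part1.
- by apply/forallP => x; apply/forallP => y; rewrite part2.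
Qed.

Definition place (dd : data) (l : 'I_m * 'I_m) (x : A) : B :=
  dd.1 ((dd.2 x).1, Ordinal (slot_lt l.1 l.2 (dd.2 x).1 (dd.2 x).2)).

Definition matches (dd : data) l (g : orientation n M) : bool :=
  [forall x, forall y, ~~ sp x y ==> (oriented g (place dd l x) (place dd l y) == EA x y)].

Definition cross_pairs (dd : data) l : {set target_pair n M} :=
  [set (place dd l xy.1, place dd l xy.2) | xy in [set xy : A * A | ~~ sp xy.1 xy.2]].

Lemma place_eq (dd : data) l l' x x' : injective dd.1 -> place dd l x = place dd l' x' ->
  [/\ (dd.2 x).1 = (dd.2 x').1, l.1 + l.2 * (dd.2 x).1 = l'.1 + l'.2 * (dd.2 x).1
    & (dd.2 x).2 = (dd.2 x').2].
Proof.
move=> inj1 /inj1 [e1 e2].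
have [] := block_offset_inj (ltn_ord (dd.2 x).2) (ltn_ord (dd.2 x').2) e2.
by rewrite -e1 => -> /val_inj.
Qed.

Lemma place_inj (dd : data) l : valid dd -> injective (place dd l).
Proof.
case/validP=> inj1 _ inj2 _ x y /(place_eq inj1) [e1 _ e2]; apply: inj2.
by rewrite [dd.2 x]surjective_pairing e1 e2 -surjective_pairing.
Qed.

Lemma place_part (dd : data) l x y : valid dd ->
  ((place dd l x).1 == (place dd l y).1) = sp x y.
Proof. by case/validP=> _ part1 _ part2; rewrite part1 part2. Qed.

(* Different parameters use disjoint sets of bits: a cross pair spans two
   target parts [t != t'], and its slots at [t] and [t'] determine [(a, b)]. *)
Lemma cross_pairs_disjoint (dd : data) l l' : valid dd -> l != l' ->
  [disjoint cross_pairs dd l & cross_pairs dd l'].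
Proof.
case/validP=> inj1 _ _ part2 ll'; rewrite -setI_eq0; apply/eqP/setP => c; rewrite !inE.
apply/negP => /andP[/imsetP[[x y] + ->] /imsetP[[x' y'] _ [ex ey]]].
rewrite inE /= part2 => txy.
have [_ ea _] := place_eq inj1 ex; have [_ eb _] := place_eq inj1 ey.
have [e1 e2] := affine_pair_inj txy ea eb.
case: l l' ll' e1 e2 {ex ey ea eb} => [a b] [a' b'] /= + e1 e2.
by rewrite xpair_eqE -!val_eqE /= e1 e2 !eqxx.
Qed.

Lemma cross_pairs_card (dd : data) l : #|cross_pairs dd l| <= n * n.
Proof. by rewrite (leq_trans (leq_imset_card _ _)) // -card_prod max_card. Qed.

Lemma cross_pairs_mem (dd : data) l x y :
  ~~ sp x y -> (place dd l x, place dd l y) \in cross_pairs dd l.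
Proof. by move=> xy; apply/imsetP; exists (x, y); rewrite ?inE. Qed.

Lemma matches_local (dd : data) l (g g' : orientation n M) :
  (forall c, c \in cross_pairs dd l -> g c = g' c) -> matches dd l g = matches dd l g'.
Proof.
move=> gg'; apply: eq_forallb => x; apply: eq_forallb => y.
case: (boolP (sp x y)) => //= xy.
by rewrite /oriented !gg' ?cross_pairs_mem // same_partC.
Qed.

(* Each copy can be made to match: orient its cross pairs as in the source. *)
Lemma matches_sat (dd : data) l : valid dd -> exists g, matches dd l g.
Proof.
move=> vd.
pose g : orientation n M :=
  [ffun c => [exists xy : A * A, (c == (place dd l xy.1, place dd l xy.2)) && EA xy.1 xy.2]].
have gE x y : g (place dd l x, place dd l y) = EA x y.
  rewrite ffunE; apply/existsP/idP => [[[x' y'] /andP[/eqP[]]]|Exy].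
    by move=> /(place_inj vd) -> /(place_inj vd) ->.
  by exists (x, y); rewrite eqxx.
exists g; apply/forallP => x; apply/forallP => y; apply/implyP => xy.
rewrite /oriented place_part // xy !gE; case: ifP => _ //.
by rewrite -cross_edge // same_partC.
Qed.

(* Since the [m * m] copies use disjoint bits, a uniformly random orientation
   fails all of them with probability at most [(1 - 2 ^ - (n * n)) ^ (m * m)]. *)
Lemma card_fail_all (dd : data) : valid dd ->
  #|[set g : orientation n M | [forall l, ~~ matches dd l g]]| * (2 ^ (n * n)) ^ (m * m)
   <= 2 ^ #|target_pair n M| * (2 ^ (n * n)).-1 ^ (m * m).
Proof.
move=> vd; set ls := enum {: 'I_m * 'I_m}.
have -> : m * m = size ls by rewrite -cardE card_prod card_ord.
have := @card_avoid_local_events _ _ ls (cross_pairs dd) (matches dd) (2 ^ (n * n)).-1.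
rewrite prednK ?expn_gt0 //.
have -> : #|[set g : orientation n M | [forall l, ~~ matches dd l g]]|
        = #|[set g | all (fun l => ~~ matches dd l g) ls]|.
  by apply: eq_card => g; rewrite !inE; apply/forallP/allP => [h l _|h l]; rewrite ?h ?mem_enum.
apply; first exact: enum_uniq.
- by move=> l l' _ _; apply: cross_pairs_disjoint.
- exact: matches_local.
- by move=> l _; apply: matches_sat.
- by move=> l; rewrite leq_exp2l // cross_pairs_card.
Qed.

Lemma good_orientation_exists :
  (n * M) ^ (n * M) * (n * n) ^ n * (2 ^ (n * n)).-1 ^ (m * m) < (2 ^ (n * n)) ^ (m * m) ->
  exists g : orientation n M, forall dd, valid dd -> exists l, matches dd l g.
Proof.
set c := (2 ^ (n * n)) ^ (m * m); set d := (2 ^ (n * n)).-1 ^ (m * m) => room.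
pose bad := \bigcup_(dd : data) [set g : orientation n M | valid dd && [forall l, ~~ matches dd l g]].
have card_data : #|{: data}| = (n * M) ^ (n * M) * (n * n) ^ n.
  by rewrite card_prod !card_ffun !card_prod !card_ord.
have bad_small : #|bad| * c <= #|{: data}| * (2 ^ #|target_pair n M| * d).
  apply: leq_trans (leq_mul (card_bigcup_le _) (leqnn c)) _.
  rewrite big_distrl /= -sum_nat_const; apply: leq_sum => dd _.
  case: (boolP (valid dd)) => vd; last first.
    by rewrite (eq_card0 (A := [set g | false && _])) // => g; rewrite inE.
  apply: leq_trans (card_fail_all vd); rewrite leq_mul2r; apply/orP; right.
  by apply: subset_leq_card; apply/subsetP => g; rewrite !inE.
have bad_lt : #|bad| < #|{: orientation n M}|.
  rewrite card_ffun card_bool -(ltn_pmul2r (_ : 0 < c)) ?expn_gt0 //.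
  apply: leq_ltn_trans bad_small _.
  by rewrite mulnCA ltn_pmul2l ?expn_gt0 // card_data.
have /subsetPn[g _ gbad] : ~~ ([set: orientation n M] \subset bad).
  by apply: contraL bad_lt => /subset_leq_card; rewrite cardsT -leqNgt.
exists g => dd vd; case: (boolP [exists l, matches dd l g]) => [/existsP//|none].
by case/negP: gbad; apply/bigcupP; exists dd; rewrite // inE vd -negb_exists.
Qed.

Lemma source_coords ltA : in_K_omega_star EA ltA ->
  exists tau : {ffun A -> 'I_n * 'I_n},
  [/\ injective tau, forall x y, sp x y = ((tau x).1 == (tau y).1)
    & forall x y, ltA x y = lex_lt (tau x) (tau y)].
Proof.
move=> HA; have pE := part_ofE cmA.
have rank_lt x : part_rank ltA (part_of EA) x < n.
  exact: leq_trans (part_rank_lt _ _ x) (leq_imset_card _ _).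
have pos_lt x : part_pos ltA (part_of EA) x < n.
  exact: leq_trans (part_pos_lt (part_of EA) HA x) (max_card _).
exists [ffun x => (Ordinal (rank_lt x), Ordinal (pos_lt x))].
split=> x y; rewrite ?ffunE.
- by case=> rxy pxy; apply: (coords_inj HA pE).
- by rewrite -val_eqE /= (part_rank_eqE HA pE) pE.
- exact: (lt_lex HA pE).
Qed.

Lemma place_embedding (dd : data) l g ltA ltB :
  valid dd -> matches dd l g ->
  (forall x y, ltA x y = lex_lt (dd.2 x) (dd.2 y)) ->
  (forall u v, ltB (dd.1 u) (dd.1 v) = lex_lt u v) ->
  embedding EA ltA (oriented g) ltB (place dd l).
Proof.
move=> vd /forallP ml ltA_lex ltB_lex; split=> [|x y|x y]; first exact: place_inj.
  case: (boolP (sp x y)) => xy; last by apply/eqP; have /forallP/(_ y)/implyP := ml x; apply.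
  by rewrite (same_part_no_edge cmA xy) /oriented place_part // xy.
rewrite ltB_lex ltA_lex /lex_lt /=; case: eqVneq => //= ->.
by rewrite ltn_add2l.
Qed.
End Placement.

Theorem theorem8p5 :
  forall (A : finType) (EA : rel A), complete_multipartite EA ->
  exists (B : finType) (EB : rel B), complete_multipartite EB /\
    forall (ltA : rel A) (ltB : rel B),
      in_K_omega_star EA ltA -> in_K_omega_star EB ltB ->
      exists f : A -> B, embedding EA ltA EB ltB f.
Proof.
move=> A EA cmA.
have [A0|n_gt0] := posnP #|A|.
  exists A, EA; split=> // ltA ltB _ _; exists id.
  by split=> x; have := card0_eq A0 x; rewrite inE.
have [m room] := room_for_union_bound n_gt0.
have [g good] := good_orientation_exists cmA room.
exists (target #|A| (#|A| * (m * #|A|))), (oriented g); split; first exact: oriented_cm.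
move=> ltA ltB HA HB.
have [tau [tau_inj tau_part ltA_lex]] := source_coords cmA HA.
have [psi [psi_inj psi_part ltB_lex]] := target_coords HB.
have vd : valid EA (psi, tau) by apply/validP.
have [l ml] := good _ vd.
by exists (place (psi, tau) l); apply: place_embedding.
Qed.
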